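(* For every $k\in\mathbb{N}$, the feasible region $P_k\subseteq[0,1]^{\mathcal{S}_k}$ is convex.
   Context: $\mathcal{S}_n$ denotes the set of permutations of $[n]$ and $\mathcal{S}$ the set of all finite permutations. For distinct reals $x_1,\dots,x_n$, $\mathrm{std}(x_1,\dots,x_n)$ is the unique $\pi\in\mathcal{S}_n$ with $\pi(i)<\pi(j)\iff x_i<x_j$; for $\sigma\in\mathcal{S}_n$ and $I\subseteq[n]$, $\mathrm{pat}_I(\sigma)=\mathrm{std}((\sigma(i))_{i\in I})$. For $\pi\in\mathcal{S}_k$, $\sigma\in\mathcal{S}_n$, $\mathrm{c\text{-}occ}(\pi,\sigma)$ is the number of intervals $I\subseteq[n]$ with $\mathrm{pat}_I(\sigma)=\pi$ and $\widetilde{\mathrm{c\text{-}occ}}(\pi,\sigma)=\mathrm{c\text{-}occ}(\pi,\sigma)/n$. The feasible region is $$P_k=\{\vec v\in[0,1]^{\mathcal{S}_k}\mid \exists(\sigma^m)_{m\in\mathbb N}\in\mathcal{S}^{\mathbb N}: |\sigma^m|\to\infty,\ \widetilde{\mathrm{c\text{-}occ}}(\pi,\sigma^m)\to v_\pi\ \forall\pi\in\mathcal{S}_k\}.$$ *)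

From HB Require Import structures.
From mathcomp Require Import all_boot all_order all_fingroup.
From Stdlib Require Import Reals.

Set Implicit Arguments.
Unset Strict Implicit.
Unset Printing Implicit Defensive.

(* Positions are 0-based: [n] is identified with 'I_n = {0,..,n-1}. *)

(* value sigma(j) of a permutation at a natural index (0 outside range) *)
Definition perm_at (n : nat) (sigma : 'S_n) (j : nat) : nat :=
  match @insub nat (fun x => x < n) 'I_n j with
  | Some x => val (sigma x)
  | None => 0
  end.

(* pat_I(sigma) = pi for the interval I = {i, ..., i+k-1} (with i+k <= n):
   std((sigma(i+a))_{a<k}) = pi, i.e. pi(a) < pi(b) <-> sigma(i+a) < sigma(i+b). *)
Definition pat_at (k n : nat) (pi : 'S_k) (sigma : 'S_n) (i : nat) : bool :=
  (i + k <= n) &&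
  [forall a : 'I_k, forall b : 'I_k,
     (pi a < pi b) == (perm_at sigma (i + a) < perm_at sigma (i + b))].

Definition cocc (k n : nat) (pi : 'S_k) (sigma : 'S_n) : nat :=
  count (pat_at pi sigma) (iota 0 n.+1).

Definition cocc_tilde (k n : nat) (pi : 'S_k) (sigma : 'S_n) : R :=
  (INR (cocc pi sigma) / INR n)%R.

Definition feasible (k : nat) (v : 'S_k -> R) : Prop :=
  (forall pi : 'S_k, (0 <= v pi <= 1)%R) /\
  exists (N : nat -> nat) (sigma : forall m : nat, 'S_(N m)),
    (forall B : nat, exists M : nat, forall m : nat, (M <= m)%coq_nat -> (B <= N m)%coq_nat) /\
    (forall pi : 'S_k, Un_cv (fun m => cocc_tilde pi (sigma m)) (v pi)).

From HB Require Import structures.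
From mathcomp Require Import all_boot all_order all_fingroup zify.
From Stdlib Require Import Reals Lra ZArith.

(* Convexity comes from concatenation.  Placing [p * a] copies of a permutation of
   size [n] next to [n * b] copies of a permutation of size [p] (the second block
   shifted above the first) gives a permutation in which the two blocks have
   lengths in ratio [a : b]; each of its consecutive-pattern counts is the
   corresponding weighted sum of the counts of the two pieces, up to [k] straddling
   occurrences gained and one occurrence lost at each junction.  Relative to the
   length this error is [O(k / n + k / p)].  Choosing [a / (a + b) -> t] along the
   two approximating sequences, the normalized counts converge to
   [t * v + (1 - t) * w]. *)

Definition occurs_at {k} (pi : 'S_k) (f : nat -> nat) (i : nat) : bool :=
  [forall a : 'I_k, forall b : 'I_k, (pi a < pi b) == (f (i + a) < f (i + b))].

Definition occ_count {k} (pi : 'S_k) (f : nat -> nat) (n : nat) : nat :=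
  count (fun i => (i + k <= n) && occurs_at pi f i) (iota 0 n.+1).

Lemma cocc_occ_count k n (pi : 'S_k) (s : 'S_n) :
  cocc pi s = occ_count pi (perm_at s) n.
Proof. by []. Qed.

Lemma eq_occurs_at {k} (pi : 'S_k) f g i :
  (forall a, a < k -> f (i + a) = g (i + a)) -> occurs_at pi f i = occurs_at pi g i.
Proof. by move=> fg; apply: eq_forallb => a; apply: eq_forallb => b; rewrite !fg. Qed.

Lemma eq_occ_count {k} (pi : 'S_k) f g n :
  (forall j, j < n -> f j = g j) -> occ_count pi f n = occ_count pi g n.
Proof.
move=> fg; apply: eq_count => i /=; case: (leqP (i + k) n) => //= le_ikn.
by apply: eq_occurs_at => a lt_ak; apply: fg; lia.
Qed.

Lemma count_straddling n k : count (fun i => n < i + k) (iota 0 n) <= k.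
Proof.
have -> : iota 0 n = iota 0 (n - k) ++ iota (n - k) (n - (n - k)).
  by rewrite -iotaD; congr iota; lia.
rewrite count_cat (@eq_in_count _ _ pred0) ?count_pred0 => [|i]; last first.
  by rewrite mem_iota => /andP[_ lt_i]; apply/negbTE; lia.
by rewrite (leq_trans (count_size _ _)) // size_iota; lia.
Qed.

Definition concat_fun (f : nat -> nat) (n : nat) (g : nat -> nat) : nat -> nat :=
  fun j => if j < n then f j else n + g (j - n).

Section Concat.
Variables (k : nat) (pi : 'S_k) (f g : nat -> nat) (n p : nat).

Lemma occurs_at_concat_left i :
  i + k <= n -> occurs_at pi (concat_fun f n g) i = occurs_at pi f i.
Proof. by move=> le_ikn; apply: eq_occurs_at => a lt_ak; rewrite /concat_fun ifT //; lia. Qed.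

Lemma occurs_at_concat_right j :
  occurs_at pi (concat_fun f n g) (n + j) = occurs_at pi g j.
Proof.
apply: eq_forallb => a; apply: eq_forallb => b; rewrite /concat_fun.
have shift c : n + j + c - n = j + c by lia.
by rewrite !ifF ?shift ?ltn_add2l //; lia.
Qed.

Let P := fun i => (i + k <= n + p) && occurs_at pi (concat_fun f n g) i.
Let Q := fun i => (i + k <= n) && occurs_at pi f i.

Lemma occ_count_concat :
  occ_count pi (concat_fun f n g) (n + p) = count P (iota 0 n) + occ_count pi g p.
Proof.
rewrite /occ_count -addnS iotaD count_cat; congr (_ + _).
rewrite -[n in iota n](addn0 n) iotaDl count_map; apply: eq_count => j /=.
by rewrite -addnA leq_add2l occurs_at_concat_right.
Qed.

Lemma occ_count_split :
  occ_count pi f n = count Q (iota 0 n) + ((n + k <= n) && occurs_at pi f n).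
Proof. by rewrite /occ_count -addn1 iotaD count_cat /= addn0. Qed.

Lemma occ_count_concat_le :
  occ_count pi (concat_fun f n g) (n + p) <= occ_count pi f n + occ_count pi g p + k.
Proof.
rewrite occ_count_concat occ_count_split.
have sub_PQ : subpred P (predU Q (fun i => n < i + k)).
  move=> i /andP[_ occ] /=; case: (leqP (i + k) n) => [le_ikn|]; last by rewrite orbT.
  by rewrite /Q le_ikn -(occurs_at_concat_left _ le_ikn) occ.
have := sub_count sub_PQ (iota 0 n); have := count_predUI Q (fun i => n < i + k) (iota 0 n).
have := count_straddling n k; lia.
Qed.

Lemma occ_count_concat_ge :
  occ_count pi f n + occ_count pi g p <= occ_count pi (concat_fun f n g) (n + p) + 1.
Proof.
rewrite occ_count_concat occ_count_split.
have sub_QP : subpred Q P.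
  move=> i /andP[le_ikn occ]; rewrite /P (occurs_at_concat_left _ le_ikn) occ andbT.
  exact: leq_trans le_ikn (leq_addr _ _).
have := sub_count sub_QP (iota 0 n); case: (_ && _) => /=; lia.
Qed.

End Concat.

Arguments occ_count_concat_le {k} pi f g n p.
Arguments occ_count_concat_ge {k} pi f g n p.

Fixpoint repeat_fun (f : nat -> nat) (n a : nat) : nat -> nat :=
  if a is a'.+1 then concat_fun (repeat_fun f n a') (a' * n) f else fun _ => 0.

Lemma occ_count_repeat_le {k} (pi : 'S_k) f n a :
  occ_count pi (repeat_fun f n a) (a * n) <= a * (occ_count pi f n + k) + 1.
Proof.
elim: a => [|a IHa]; first by rewrite /occ_count /=; case: (_ && _).
have := occ_count_concat_le pi (repeat_fun f n a) f (a * n) n.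
by rewrite !mulSnr /=; nia.
Qed.

Lemma occ_count_repeat_ge {k} (pi : 'S_k) f n a :
  a * occ_count pi f n <= occ_count pi (repeat_fun f n a) (a * n) + a.
Proof.
elim: a => [|a IHa] //.
have := occ_count_concat_ge pi (repeat_fun f n a) f (a * n) n.
by rewrite !mulSnr /=; nia.
Qed.

Definition is_perm_fun (f : nat -> nat) (n : nat) : Prop :=
  (forall i, i < n -> f i < n) /\
  (forall i j, i < n -> j < n -> f i = f j -> i = j).

Lemma is_perm_fun_perm_at n (s : 'S_n) : is_perm_fun (perm_at s) n.
Proof.
have perm_atE i (lt_in : i < n) : perm_at s i = val (s (Ordinal lt_in)).
  by rewrite /perm_at insubT.
split=> [i lt_in | i j lt_in lt_jn]; first by rewrite (perm_atE i lt_in) ltn_ord.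
by rewrite (perm_atE i lt_in) (perm_atE j lt_jn) => /val_inj/perm_inj[].
Qed.

Lemma is_perm_fun_concat f n g p :
  is_perm_fun f n -> is_perm_fun g p -> is_perm_fun (concat_fun f n g) (n + p).
Proof.
move=> [f_lt f_inj] [g_lt g_inj]; rewrite /concat_fun; split=> [i lt_i | i j lt_i lt_j].
  by case: ifP => lt_in; [have := f_lt i lt_in | have := g_lt (i - n)]; lia.
case: ifP => lt_in; case: ifP => lt_jn.
- exact: f_inj.
- by have := f_lt i lt_in; lia.
- by have := f_lt j lt_jn; lia.
- by move=> /addnI/g_inj; lia.
Qed.

Lemma is_perm_fun_repeat f n a : is_perm_fun f n -> is_perm_fun (repeat_fun f n a) (a * n).
Proof.
move=> f_perm; elim: a => [|a IHa] //=.
by rewrite mulSnr; apply: is_perm_fun_concat.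
Qed.

Lemma perm_of_fun {f n} :
  is_perm_fun f n -> {s : 'S_n | forall j, j < n -> perm_at s j = f j}.
Proof.
move=> [f_lt f_inj].
pose h (i : 'I_n) : 'I_n := insubd i (f i).
have hE i : val (h i) = f i by rewrite val_insubd f_lt.
have h_inj : injective h.
  by move=> i j /(congr1 val); rewrite !hE => /f_inj eq_ij; apply/val_inj/eq_ij.
by exists (perm h_inj) => j lt_jn; rewrite /perm_at insubT /= permE hE.
Qed.

Lemma Rabs_INR_div_sub_le {C X E L : nat} :
  C <= X + E -> X <= C + E -> 0 < L ->
  (Rabs (INR C / INR L - INR X / INR L) <= INR E / INR L)%R.
Proof.
move=> /leP le_CXE /leP le_XCE /ltP/lt_0_INR L_gt0.
apply: Rabs_le; rewrite -!Rdiv_minus_distr -Rdiv_opp_l.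
move: le_CXE le_XCE => /le_INR; rewrite plus_INR => ? /le_INR; rewrite plus_INR => ?.
have inv_L_ge0 : (0 <= / INR L)%R by apply/Rlt_le/Rinv_0_lt_compat.
by split; apply: Rmult_le_compat_r => //; lra.
Qed.

Lemma mix_ratio_close (k n p a b c d C : nat) :
  0 < n -> 0 < p -> 0 < a + b ->
  let X := p * a * c + n * b * d in
  let E := (k + 2) * (2 * p * (a + b) + n * (a + b)) in
  C <= X + E -> X <= C + E ->
  (Rabs (INR C / INR (n * p * (a + b)) -
         (INR a / INR (a + b) * (INR c / INR n) + INR b / INR (a + b) * (INR d / INR p)))
   <= (INR k + 2) * (2 / INR n + / INR p))%R.
Proof.
move=> n_gt0 p_gt0 ab_gt0 X E le_CXE le_XCE.
have L_gt0 : 0 < n * p * (a + b) by rewrite !muln_gt0 n_gt0 p_gt0.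
have := Rabs_INR_div_sub_le le_CXE le_XCE L_gt0.
move: n_gt0 p_gt0 ab_gt0 => /ltP/lt_0_INR ? /ltP/lt_0_INR ? /ltP/lt_0_INR.
rewrite /X /E !(plus_INR, mult_INR) /= => ?.
by congr (Rle (Rabs (_ - _)) _); field; lra.
Qed.

Section Mixture.
Variables (n p : nat) (s1 : 'S_n) (s2 : 'S_p) (a b : nat).

Definition mix_len : nat := p * a * n + n * b * p.

Definition mix_fun : nat -> nat :=
  concat_fun (repeat_fun (perm_at s1) n (p * a)) (p * a * n)
             (repeat_fun (perm_at s2) p (n * b)).

Lemma is_perm_fun_mix : is_perm_fun mix_fun mix_len.
Proof. by apply: is_perm_fun_concat; apply: is_perm_fun_repeat; apply: is_perm_fun_perm_at. Qed.

Definition mix_perm : 'S_mix_len := proj1_sig (perm_of_fun is_perm_fun_mix).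

Lemma mix_lenE : mix_len = n * p * (a + b).
Proof. by rewrite /mix_len; lia. Qed.

Variables (k : nat) (pi : 'S_k).

Lemma cocc_mix_perm : cocc pi mix_perm = occ_count pi mix_fun mix_len.
Proof. by rewrite cocc_occ_count; apply: eq_occ_count => j; apply: (proj2_sig (perm_of_fun _)). Qed.

Hypotheses (p_gt0 : 0 < p) (ab_gt0 : 0 < a + b).

Lemma cocc_mix_perm_close :
  let X := p * a * cocc pi s1 + n * b * cocc pi s2 in
  let E := (k + 2) * (2 * p * (a + b) + n * (a + b)) in
  cocc pi mix_perm <= X + E /\ X <= cocc pi mix_perm + E.
Proof.
rewrite cocc_mix_perm !cocc_occ_count /mix_fun /mix_len.
have := occ_count_concat_le pi (repeat_fun (perm_at s1) n (p * a))
  (repeat_fun (perm_at s2) p (n * b)) (p * a * n) (n * b * p).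
have := occ_count_concat_ge pi (repeat_fun (perm_at s1) n (p * a))
  (repeat_fun (perm_at s2) p (n * b)) (p * a * n) (n * b * p).
have := occ_count_repeat_le pi (perm_at s1) n (p * a).
have := occ_count_repeat_le pi (perm_at s2) p (n * b).
have := occ_count_repeat_ge pi (perm_at s1) n (p * a).
have := occ_count_repeat_ge pi (perm_at s2) p (n * b).
have : 1 <= p * (a + b) by rewrite muln_gt0 p_gt0.
rewrite -!mulnA; nia.
Qed.

Lemma cocc_tilde_mix_perm_close : 0 < n ->
  (Rabs (cocc_tilde pi mix_perm -
         (INR a / INR (a + b) * cocc_tilde pi s1 + INR b / INR (a + b) * cocc_tilde pi s2))
   <= (INR k + 2) * (2 / INR n + / INR p))%R.
Proof.
move=> n_gt0; have [le_CXE le_XCE] := cocc_mix_perm_close.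
rewrite /cocc_tilde.
have -> : INR mix_len = INR (n * p * (a + b)) by rewrite mix_lenE.
exact: mix_ratio_close.
Qed.

End Mixture.

Arguments mix_perm {n p} s1 s2 a b.

Definition diverges (N : nat -> nat) : Prop :=
  forall B, exists M, forall m, (M <= m)%coq_nat -> (B <= N m)%coq_nat.

Lemma Un_cv_const (l : R) : Un_cv (fun _ => l) l.
Proof. by move=> eps eps_gt0; exists 0%N => m _; rewrite /R_dist Rminus_diag_eq // Rabs_R0. Qed.

Lemma Un_cv_inv_INR {N : nat -> nat} : diverges N -> Un_cv (fun m => / INR (N m))%R 0%R.
Proof.
move=> N_infty eps eps_gt0; have [B [inv_B_lt B_gt0]] := archimed_cor1 eps eps_gt0.
have [M leBN] := N_infty B; exists M => m le_Mm.
have B_le_N : (INR B <= INR (N m))%R by apply/le_INR/leBN.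
have INR_B_gt0 : (0 < INR B)%R by apply: lt_0_INR.
rewrite /R_dist Rminus_0_r Rabs_right; last by apply/Rle_ge/Rlt_le/Rinv_0_lt_compat; lra.
exact: Rle_lt_trans (Rinv_le_contravar _ _ INR_B_gt0 B_le_N) inv_B_lt.
Qed.

Lemma Un_cv_close {e u d : nat -> R} {l : R} :
  Un_cv u l -> Un_cv d 0 ->
  (exists M, forall m, (M <= m)%coq_nat -> (Rabs (e m - u m) <= d m)%R) -> Un_cv e l.
Proof.
move=> u_cv d_cv [M close_eu] eps eps_gt0.
have [N1 u_close] := u_cv (eps / 2)%R ltac:(lra).
have [N2 d_small] := d_cv (eps / 2)%R ltac:(lra).
exists (Nat.max M (Nat.max N1 N2)) => m le_m.
have := u_close m ltac:(lia); have := d_small m ltac:(lia); have := close_eu m ltac:(lia).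
rewrite /R_dist Rminus_0_r => ? ? ?.
have := Rle_abs (d m); have := Rabs_triang (e m - u m) (u m - l).
by rewrite (_ : e m - u m + (u m - l) = e m - l)%R; [lra | ring].
Qed.

Definition floor_weight (t : R) (m : nat) : nat := Z.to_nat (Int_part (t * INR m.+1)).

Lemma INR_floor_weight {t : R} : (0 <= t <= 1)%R -> forall m,
  (INR (floor_weight t m) <= t * INR m.+1 < INR (floor_weight t m) + 1)%R.
Proof.
move=> t01 m; have m1_gt0 : (0 < INR m.+1)%R by apply: lt_0_INR; lia.
have [le_floor gt_floor] := base_Int_part (t * INR m.+1).
have floor_ge0 : (0 <= Int_part (t * INR m.+1))%Z.
  have /lt_IZR : (-1 < IZR (Int_part (t * INR m.+1)))%R.
    by have := Rmult_le_pos _ _ (proj1 t01) (Rlt_le _ _ m1_gt0); lra.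
  lia.
rewrite /floor_weight INR_IZR_INZ Z2Nat.id //; lra.
Qed.

Lemma floor_weight_le {t : R} : (0 <= t <= 1)%R -> forall m, floor_weight t m <= m.+1.
Proof.
move=> t01 m; have [le_floor _] := INR_floor_weight t01 m.
by apply/leP/INR_le; have := pos_INR m.+1; nra.
Qed.

Lemma floor_weight_cv {t : R} :
  (0 <= t <= 1)%R -> Un_cv (fun m => INR (floor_weight t m) / INR m.+1)%R t.
Proof.
move=> t01.
apply: (Un_cv_close (Un_cv_const t) (@Un_cv_inv_INR S _)).
  by move=> B; exists B => m le_Bm; lia.
exists 0%N => m _; have [? ?] := INR_floor_weight t01 m.
have m1_gt0 : (0 < INR m.+1)%R by apply: lt_0_INR; lia.
have inv_gt0 := Rinv_0_lt_compat _ m1_gt0.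
have := Rinv_r _ (Rgt_not_eq _ _ m1_gt0).
by rewrite /Rdiv => ?; apply: Rabs_le; split; nra.
Qed.

Lemma floor_coweight_cv {t : R} :
  (0 <= t <= 1)%R -> Un_cv (fun m => INR (m.+1 - floor_weight t m) / INR m.+1)%R (1 - t).
Proof.
move=> t01; apply: Un_cv_ext (CV_minus _ _ _ _ (Un_cv_const 1) (floor_weight_cv t01)) => m.
have m1_gt0 : (0 < INR m.+1)%R by apply: lt_0_INR; lia.
rewrite -minusE minus_INR; last exact/leP/floor_weight_le.
by field; lra.
Qed.

Section MixSequence.
Variables (t : R) (N1 N2 : nat -> nat).
Variables (s1 : forall m, 'S_(N1 m)) (s2 : forall m, 'S_(N2 m)).
Hypotheses (t01 : (0 <= t <= 1)%R) (N1_infty : diverges N1) (N2_infty : diverges N2).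

Definition mix_len_seq (m : nat) : nat :=
  mix_len (N1 m) (N2 m) (floor_weight t m) (m.+1 - floor_weight t m).

Definition mix_seq (m : nat) : 'S_(mix_len_seq m) :=
  mix_perm (s1 m) (s2 m) (floor_weight t m) (m.+1 - floor_weight t m).

Let weights_sum m : floor_weight t m + (m.+1 - floor_weight t m) = m.+1.
Proof. by have := floor_weight_le t01 m; lia. Qed.

Lemma mix_len_seq_diverges : diverges mix_len_seq.
Proof.
move=> B; have [M1 le_N1] := N1_infty B; have [M2 le_N2] := N2_infty 1.
exists (Nat.max M1 M2) => m le_m; rewrite /mix_len_seq mix_lenE weights_sum.
have := le_N1 m ltac:(lia); have := le_N2 m ltac:(lia); nia.
Qed.

Lemma cocc_tilde_mix_seq_cv k (pi : 'S_k) (v w : R) :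
  Un_cv (fun m => cocc_tilde pi (s1 m)) v -> Un_cv (fun m => cocc_tilde pi (s2 m)) w ->
  Un_cv (fun m => cocc_tilde pi (mix_seq m)) (t * v + (1 - t) * w)%R.
Proof.
move=> v_cv w_cv.
apply: (Un_cv_close (d := fun m => (INR k + 2) * (2 / INR (N1 m) + / INR (N2 m)))%R
         (CV_plus _ _ _ _ (CV_mult _ _ _ _ (floor_weight_cv t01) v_cv)
                          (CV_mult _ _ _ _ (floor_coweight_cv t01) w_cv))).
  have := CV_mult _ _ _ _ (Un_cv_const (INR k + 2)) (CV_plus _ _ _ _
            (CV_mult _ _ _ _ (Un_cv_const 2) (Un_cv_inv_INR N1_infty)) (Un_cv_inv_INR N2_infty)).
  by rewrite Rmult_0_r Rplus_0_r Rmult_0_r; exact: Un_cv_ext.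
have [M1 N1_gt0] := N1_infty 1; have [M2 N2_gt0] := N2_infty 1.
exists (Nat.max M1 M2) => m le_m.
have -> : INR m.+1 = INR (floor_weight t m + (m.+1 - floor_weight t m)) by rewrite weights_sum.
apply: cocc_tilde_mix_perm_close.
- by have := N2_gt0 m ltac:(lia); lia.
- by rewrite weights_sum.
- by have := N1_gt0 m ltac:(lia); lia.
Qed.

End MixSequence.

Theorem mainTheorem8 (k : nat) (v w : 'S_k -> R) (t : R) :
  feasible v -> feasible w -> (0 <= t <= 1)%R ->
  feasible (fun pi => (t * v pi + (1 - t) * w pi)%R).
Proof.
move=> [v01 [N1 [s1 [N1_infty v_cv]]]] [w01 [N2 [s2 [N2_infty w_cv]]]] t01.
split=> [pi | ]; first by have := v01 pi; have := w01 pi; nra.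
exists (mix_len_seq t N1 N2), (@mix_seq t N1 N2 s1 s2); split.
  exact: mix_len_seq_diverges.
by move=> pi; apply: cocc_tilde_mix_seq_cv.
Qed.
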